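(* Let $h_6$ be the real two-photon Lie algebra. A Lie bialgebra structure $\delta$ on $h_6$ satisfies $\delta(N)=0$ if and only if there exist real numbers $c_1,c_2$ such that $\delta(X)=[1\otimes X+X\otimes 1,\,r]$ for all $X\in h_6$, with $$r=c_1\,N\wedge M+c_2\,A_+\wedge A_- .$$ Explicitly, $\delta(N)=\delta(M)=0$, $\delta(A_+)=-(c_1+c_2)A_+\wedge M$, $\delta(A_-)=(c_1-c_2)A_-\wedge M$, $\delta(B_+)=-2c_1B_+\wedge M$, $\delta(B_-)=2c_1B_-\wedge M$. Moreover, for this $r$ one has $[[r,r]]=-c_2^2\,A_+\wedge A_-\wedge M$, so $r$ is a solution of the classical Yang–Baxter equation (non-standard case) if and only if $c_2=0$, and is standard (nonzero Schouten bracket, satisfying only the modified classical Yang–Baxter equation) if and only if $c_2\neq 0$.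
   Context: The two-photon Lie algebra $h_6$ is the real Lie algebra with basis $\{N,A_+,A_-,B_+,B_-,M\}$ and brackets $[N,A_+]=A_+$, $[N,A_-]=-A_-$, $[A_-,A_+]=M$, $[N,B_+]=2B_+$, $[N,B_-]=-2B_-$, $[B_-,B_+]=4N+2M$, $[A_+,B_-]=-2A_-$, $[A_+,B_+]=0$, $[A_-,B_+]=2A_+$, $[A_-,B_-]=0$, and $M$ central. A Lie bialgebra structure on a Lie algebra $g$ is a linear map $\delta:g\to g\otimes g$ which is a 1-cocycle, i.e. $\delta([X,Y])=[\delta(X),1\otimes Y+Y\otimes 1]+[1\otimes X+X\otimes 1,\delta(Y)]$, and whose dual map $g^*\otimes g^*\to g^*$ is a Lie bracket. For $r\in g\wedge g$, $r=\sum r^{ij}X_i\otimes X_j$, the Schouten bracket is $[[r,r]]=[r_{12},r_{13}]+[r_{12},r_{23}]+[r_{13},r_{23}]$, with $r_{12}=\sum r^{ij}X_i\otimes X_j\otimes 1$, $r_{13}=\sum r^{ij}X_i\otimes 1\otimes X_j$, $r_{23}=\sum r^{ij}1\otimes X_i\otimes X_j$; the classical Yang–Baxter equation is $[[r,r]]=0$. Here $X\wedge Y=X\otimes Y-Y\otimes X$. *)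

From HB Require Import structures.
From mathcomp Require Import all_boot all_order all_algebra.
Set Implicit Arguments. Unset Strict Implicit. Unset Printing Implicit Defensive.
Import Order.TTheory GRing.Theory Num.Theory.
Local Open Scope ring_scope.

(* The two-photon Lie algebra h6 over a real field R, in coordinates with
   respect to the ordered basis (X_0,...,X_5) = (N, A+, A-, B+, B-, M).
   Elements of h6 (x) h6 : matrices 'M[R]_6, t i j = coefficient of X_i (x) X_j. *)

Section H6.
Variable R : realFieldType.

(* structure constants: cst i j k = coefficient of X_k in [X_i, X_j] *)
Definition cst_nat (i j k : nat) : R :=
  match i, j, k with
  | 0, 1, 1 => 1 | 1, 0, 1 => -1            (* [N,A+] = A+ *)
  | 0, 2, 2 => -1 | 2, 0, 2 => 1            (* [N,A-] = -A- *)
  | 2, 1, 5 => 1 | 1, 2, 5 => -1            (* [A-,A+] = M *)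
  | 0, 3, 3 => 2 | 3, 0, 3 => -2            (* [N,B+] = 2B+ *)
  | 0, 4, 4 => -2 | 4, 0, 4 => 2            (* [N,B-] = -2B- *)
  | 4, 3, 0 => 4 | 3, 4, 0 => -4            (* [B-,B+] = 4N + 2M *)
  | 4, 3, 5 => 2 | 3, 4, 5 => -2
  | 1, 4, 2 => -2 | 4, 1, 2 => 2            (* [A+,B-] = -2A- *)
  | 2, 3, 1 => 2 | 3, 2, 1 => -2            (* [A-,B+] = 2A+ *)
  | _, _, _ => 0                            (* all other brackets vanish, M central *)
  end.

Definition cst (i j k : 'I_6) : R := cst_nat i j k.

Definition h6 := 'rV[R]_6.
Definition h6t2 := 'M[R]_6.
Definition h6t3 := {ffun 'I_6 * 'I_6 * 'I_6 -> R}.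

Definition bas (i : 'I_6) : h6 := delta_mx 0 i.
Definition eN  : h6 := bas (inord 0).
Definition eAp : h6 := bas (inord 1).
Definition eAm : h6 := bas (inord 2).
Definition eBp : h6 := bas (inord 3).
Definition eBm : h6 := bas (inord 4).
Definition eM  : h6 := bas (inord 5).

Definition br (x y : h6) : h6 :=
  \row_k \sum_i \sum_j x 0 i * y 0 j * cst i j k.

Definition adm (x : h6) : 'M[R]_6 := \matrix_(i, k) br x (bas i) 0 k.

Definition tens (x y : h6) : h6t2 := x^T *m y.
Definition wedge (x y : h6) : h6t2 := tens x y - tens y x.

Definition tens3 (x y z : h6) : h6t3 :=
  [ffun t : 'I_6 * 'I_6 * 'I_6 => x 0 t.1.1 * y 0 t.1.2 * z 0 t.2].
Definition wedge3 (x y z : h6) : h6t3 :=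
  [ffun t => tens3 x y z t + tens3 y z x t + tens3 z x y t
           - tens3 y x z t - tens3 x z y t - tens3 z y x t].

(* action of x on g (x) g : [1 (x) x + x (x) 1, t] *)
Definition ad2 (x : h6) (t : h6t2) : h6t2 := (adm x)^T *m t + t *m adm x.

Definition ad3 (x : h6) (T : h6t3) : h6t3 :=
  [ffun t : 'I_6 * 'I_6 * 'I_6 =>
     let: (a, b, c) := t in
       \sum_i adm x i a * T (i, b, c)
     + \sum_i adm x i b * T (a, i, c)
     + \sum_i adm x i c * T (a, b, i)].

(* Schouten bracket [[r,r]] = [r12,r13] + [r12,r23] + [r13,r23] *)
Definition schouten (r : h6t2) : h6t3 :=
  [ffun t : 'I_6 * 'I_6 * 'I_6 =>
     let: (a, b, c) := t in
       \sum_i \sum_k r i b * r k c * cst i k a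
     + \sum_j \sum_k r a j * r k c * cst j k b
     + \sum_j \sum_l r a j * r b l * cst j l c].

(* A linear map delta : h6 -> h6 (x) h6, given by its values D i on the basis *)
Definition delta_of (D : 'I_6 -> h6t2) (x : h6) : h6t2 := \sum_i x 0 i *: D i.

Definition cocycle (D : 'I_6 -> h6t2) : Prop :=
  forall x y : h6,
    delta_of D (br x y) = ad2 x (delta_of D y) - ad2 y (delta_of D x).

(* dual map g* (x) g* -> g*, (f, g) |-> (X |-> (f (x) g)(delta X)),
   with g* identified with row vectors via the dual basis *)
Definition dual_br (D : 'I_6 -> h6t2) (f g : h6) : h6 :=
  \row_k \sum_i \sum_j f 0 i * g 0 j * D k i j.

Definition dual_is_Lie (D : 'I_6 -> h6t2) : Prop :=
  (forall f : h6, dual_br D f f = 0) /\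
  (forall f g h : h6,
     dual_br D f (dual_br D g h) + dual_br D g (dual_br D h f)
     + dual_br D h (dual_br D f g) = 0).

Definition lie_bialgebra (D : 'I_6 -> h6t2) : Prop :=
  cocycle D /\ dual_is_Lie D.

Definition r_of (c1 c2 : R) : h6t2 := c1 *: wedge eN eM + c2 *: wedge eAp eAm.

End H6.

From HB Require Import structures.
From mathcomp Require Import all_boot all_order all_algebra.
From mathcomp Require Import ring lra.
Set Implicit Arguments. Unset Strict Implicit. Unset Printing Implicit Defensive.
Import Order.TTheory GRing.Theory Num.Theory.
Local Open Scope ring_scope.

(* Grade h6 by the eigenvalues of ad N: N, A+, A-, B+, B-, M have weights
   0, 1, -1, 2, -2, 0.  When delta(N) = 0 the cocycle condition for the pair
   (N, X) says that delta commutes with ad N, so delta(X_k) only has components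
   X_a /\ X_b with w_a + w_b = w_k; with skew-symmetry this leaves 13 unknowns.
   Since M is central, delta(M) is ad-invariant, hence zero, and a handful of
   further cocycle equations cut the unknowns down to three.  One of them, u,
   spans a cocycle that is not a coboundary; the dual Jacobi identity gives
   u^2 = 0.  The two remaining parameters are those of
   r = c1 N /\ M + c2 A+ /\ A-: since [1 (x) x + x (x) 1, -] is a derivation
   of the tensor algebra, its value on r is read off from the brackets of the
   basis.  The Schouten bracket of r is a coordinate computation, and
   A+ /\ A- /\ M is invariant because M is central and, up to terms killed by
   the alternation, [x, A+] = x_N A+ and [x, A-] = - x_N A-. *)

Notation iN := (@Ordinal 6 0 isT).
Notation iAp := (@Ordinal 6 1 isT).
Notation iAm := (@Ordinal 6 2 isT).
Notation iBp := (@Ordinal 6 3 isT).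
Notation iBm := (@Ordinal 6 4 isT).
Notation iM := (@Ordinal 6 5 isT).

Lemma ord6P (P : 'I_6 -> Prop) :
  P iN -> P iAp -> P iAm -> P iBp -> P iBm -> P iM -> forall i, P i.
Proof.
move=> PN PAp PAm PBp PBm PM [[|[|[|[|[|[|i]]]]]] lti] //;
  by rewrite (bool_irrelevance lti isT).
Qed.

Ltac cst_compute := cbv beta iota delta [cst cst_nat nat_of_ord].

Definition weight (i : 'I_6) : int :=
  match nat_of_ord i with 1 => 1 | 2 => -1 | 3 => 2 | 4 => -2 | _ => 0 end.

Section TwoPhoton.
Variable R : realFieldType.
Implicit Types (x u v w : h6 R) (t : h6t2 R) (D : 'I_6 -> h6t2 R).

Lemma big_ord6 (V : nmodType) (F : 'I_6 -> V) :
  \sum_i F i = F iN + F iAp + F iAm + F iBp + F iBm + F iM.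
Proof.
rewrite !big_ord_recl big_ord0 addr0 !addrA /=.
by congr (_ + _ + _ + _ + _ + _); congr F; apply: val_inj.
Qed.

Lemma basE i j : bas R i 0 j = (j == i)%:R.
Proof. by rewrite mxE eqxx. Qed.

Lemma bas_sym i j : bas R i 0 j = bas R j 0 i.
Proof. by rewrite !basE eq_sym. Qed.

Lemma sum_basl i (F : 'I_6 -> R) : \sum_j bas R i 0 j * F j = F i.
Proof.
rewrite (bigD1 i) //= basE eqxx mul1r big1 ?addr0 // => j /negbTE neq_ji.
by rewrite basE neq_ji mul0r.
Qed.

Lemma inord_ord6 k (ltk6 : (k < 6)%N) : inord k = Ordinal ltk6.
Proof. by apply: val_inj; rewrite /= inordK. Qed.

Lemma eN_bas : eN R = bas R iN. Proof. by rewrite /eN inord_ord6. Qed.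
Lemma eAp_bas : eAp R = bas R iAp. Proof. by rewrite /eAp inord_ord6. Qed.
Lemma eAm_bas : eAm R = bas R iAm. Proof. by rewrite /eAm inord_ord6. Qed.
Lemma eBp_bas : eBp R = bas R iBp. Proof. by rewrite /eBp inord_ord6. Qed.
Lemma eBm_bas : eBm R = bas R iBm. Proof. by rewrite /eBm inord_ord6. Qed.
Lemma eM_bas : eM R = bas R iM. Proof. by rewrite /eM inord_ord6. Qed.
Definition basisE := (eN_bas, eAp_bas, eAm_bas, eBp_bas, eBm_bas, eM_bas).

Lemma delta_ofE D x a b : delta_of D x a b = \sum_k x 0 k * D k a b.
Proof. by rewrite summxE; apply: eq_bigr => k _; rewrite mxE. Qed.

Lemma delta_of_bas D k : delta_of D (bas R k) = D k.
Proof. by apply/matrixP => a b; rewrite delta_ofE sum_basl. Qed.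

Lemma br_basE x j k : br x (bas R j) 0 k = \sum_i x 0 i * cst R i j k.
Proof.
rewrite mxE; apply: eq_bigr => i _.
rewrite -(sum_basl j (fun l => x 0 i * cst R i l k)).
by apply: eq_bigr => l _; rewrite mulrAC mulrC.
Qed.

Lemma admE x j k : adm x j k = \sum_i x 0 i * cst R i j k.
Proof. by rewrite mxE br_basE. Qed.

Lemma adm_bas i j k : adm (bas R i) j k = cst R i j k.
Proof. by rewrite admE sum_basl. Qed.

Lemma br_adm x u : br x u = u *m adm x.
Proof.
apply/matrixP => i0 k; rewrite ord1 !mxE.
under [RHS]eq_bigr do rewrite admE mulr_sumr.
rewrite exchange_big; apply: eq_bigr => i _; apply: eq_bigr => j _.
by rewrite mulrCA mulrA.
Qed.

Lemma br_bas i j : br (bas R i) (bas R j) = \sum_k cst R i j k *: bas R k.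
Proof.
apply/matrixP => i0 k; rewrite ord1 br_basE sum_basl summxE.
by under eq_bigr do rewrite mxE basE eq_sym -basE mulrC; rewrite sum_basl.
Qed.

Lemma cst_bas i j a : cst R i j a = \sum_k cst R i j k * bas R k 0 a.
Proof. by under eq_bigr do rewrite bas_sym mulrC; rewrite sum_basl. Qed.

Lemma cst_M i k : cst R i iM k = 0.
Proof. by elim/ord6P: i; elim/ord6P: k. Qed.

Lemma br_M x : br x (eM R) = 0.
Proof.
apply/matrixP => i0 k; rewrite ord1 eM_bas br_basE mxE big1 // => i _.
by rewrite cst_M mulr0.
Qed.

Lemma tensE u v a b : tens u v a b = u 0 a * v 0 b.
Proof. by rewrite !mxE big_ord1 mxE. Qed.

Lemma wedgeE u v a b : wedge u v a b = u 0 a * v 0 b - v 0 a * u 0 b.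
Proof. by rewrite [LHS]mxE [X in _ + X]mxE !tensE. Qed.

Lemma scale_wedge_basE c i j a b : i != j ->
  (c *: wedge (bas R i) (bas R j)) a b =
  if (a == i) && (b == j) then c else if (a == j) && (b == i) then - c else 0.
Proof.
move=> nij; rewrite mxE wedgeE !basE -!natrM !mulnb.
case: ifP => [/andP[/eqP-> /eqP->] | _].
  by rewrite (negbTE nij) /= mulr1n mulr0n subr0 mulr1.
by case: ifP => _; rewrite /= ?mulr1n ?mulr0n sub0r ?oppr0 ?mulrN1 ?mulr0.
Qed.

Lemma wedge0r u : wedge u 0 = 0.
Proof. by rewrite /wedge /tens mulmx0 trmx0 mul0mx subr0. Qed.

Lemma ad2_tens x u v : ad2 x (tens u v) = tens (br x u) v + tens u (br x v).
Proof. by rewrite /ad2 /tens !br_adm trmx_mul !mulmxA. Qed.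

Lemma ad2D x t t' : ad2 x (t + t') = ad2 x t + ad2 x t'.
Proof. by rewrite /ad2 mulmxDr mulmxDl addrACA. Qed.

Lemma ad2N x t : ad2 x (- t) = - ad2 x t.
Proof. by rewrite /ad2 mulmxN mulNmx opprD. Qed.

Lemma ad2Z x a t : ad2 x (a *: t) = a *: ad2 x t.
Proof. by rewrite /ad2 -scalemxAr -scalemxAl scalerDr. Qed.

Lemma ad2_wedge x u v : ad2 x (wedge u v) = wedge (br x u) v + wedge u (br x v).
Proof.
by rewrite /wedge ad2D ad2N !ad2_tens opprD [- _ - _]addrC addrACA.
Qed.

Lemma adm_sum x : adm x = \sum_k x 0 k *: adm (bas R k).
Proof.
apply/matrixP => i j; rewrite summxE admE.
by apply: eq_bigr => k _; rewrite mxE adm_bas.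
Qed.

Lemma ad2_sum x t : ad2 x t = \sum_k x 0 k *: ad2 (bas R k) t.
Proof.
rewrite /ad2 adm_sum linear_sum mulmx_suml mulmx_sumr -big_split.
by apply: eq_bigr => k _; rewrite !linearZ /= -scalemxAl scalerDr.
Qed.

Lemma ad2_basE k t a b :
  ad2 (bas R k) t a b = \sum_m cst R k m a * t m b + \sum_m t a m * cst R k m b.
Proof.
rewrite [LHS]mxE !mxE; congr (_ + _); apply: eq_bigr => m _.
  by rewrite mxE adm_bas.
by rewrite adm_bas.
Qed.

Lemma ad2_r_of x c1 c2 : ad2 x (r_of c1 c2) =
  c1 *: wedge (br x (eN R)) (eM R) +
  c2 *: (wedge (br x (eAp R)) (eAm R) + wedge (eAp R) (br x (eAm R))).
Proof. by rewrite /r_of ad2D !ad2Z !ad2_wedge br_M wedge0r addr0. Qed.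

Lemma coboundary_r_of c1 c2 :
  [/\ ad2 (eN R) (r_of c1 c2) = 0 /\ ad2 (eM R) (r_of c1 c2) = 0,
      ad2 (eAp R) (r_of c1 c2) = - (c1 + c2) *: wedge (eAp R) (eM R),
      ad2 (eAm R) (r_of c1 c2) = (c1 - c2) *: wedge (eAm R) (eM R),
      ad2 (eBp R) (r_of c1 c2) = - (2 * c1) *: wedge (eBp R) (eM R) &
      ad2 (eBm R) (r_of c1 c2) = (2 * c1) *: wedge (eBm R) (eM R)].
Proof.
rewrite !ad2_r_of !basisE !br_bas !big_ord6; cst_compute.
rewrite !(scale0r, add0r, addr0, scale1r).
split; [split|..]; apply/matrixP => a b; by rewrite !(wedgeE, mxE); ring.
Qed.

Lemma cocycle_bas D : cocycle D -> forall i j a b,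
  \sum_k cst R i j k * D k a b = ad2 (bas R i) (D j) a b - ad2 (bas R j) (D i) a b.
Proof.
move=> HD i j a b; move: (HD (bas R i) (bas R j)) => /(congr1 (fun m : h6t2 R => m a b)).
rewrite delta_ofE !delta_of_bas [RHS]mxE [X in _ + X]mxE => <-.
by apply: eq_bigr => k _; rewrite br_basE sum_basl.
Qed.

Lemma cst_N j k : cst R iN j k = (weight j)%:~R * bas R j 0 k.
Proof. by rewrite basE; elim/ord6P: j; elim/ord6P: k; rewrite /= ?mulr0 ?mulr1. Qed.

Lemma ad2_N t a b : ad2 (bas R iN) t a b = (weight a + weight b)%:~R * t a b.
Proof.
rewrite ad2_basE; under eq_bigr do rewrite cst_N bas_sym -mulrA mulrCA.
under [X in _ + X]eq_bigr do rewrite cst_N bas_sym mulrA mulrC.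
by rewrite !sum_basl intrD; ring.
Qed.

Lemma cocycle_weight D : cocycle D -> D iN = 0 ->
  forall k a b, weight a + weight b != weight k -> D k a b = 0.
Proof.
move=> HD DN0 k a b neq_w; move: (cocycle_bas HD iN k a b).
under eq_bigr do rewrite cst_N -mulrA.
rewrite -mulr_sumr sum_basl ad2_N DN0 /ad2 mulmx0 mul0mx addr0 mxE subr0.
move/eqP; rewrite -subr_eq0 -mulrBl -intrB mulf_eq0 intr_eq0 subr_eq0 eq_sym.
by rewrite (negbTE neq_w) => /eqP.
Qed.

Lemma dual_brE D f g k :
  dual_br D f g 0 k = \sum_i f 0 i * \sum_j g 0 j * D k i j.
Proof.
rewrite mxE; apply: eq_bigr => i _; rewrite mulr_sumr.
by apply: eq_bigr => j _; rewrite mulrA.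
Qed.

Lemma dual_Lie_skew D : dual_is_Lie D -> forall k a b, D k a b = - D k b a.
Proof.
case=> alt _ k a b.
have alt_k f : dual_br D f f 0 k = 0 by rewrite alt mxE.
have sum_basD (F : 'I_6 -> R) : \sum_i (bas R a + bas R b) 0 i * F i = F a + F b.
  by rewrite -!(sum_basl _ F) -big_split; apply: eq_bigr => i _; rewrite mxE mulrDl.
move: (alt_k (bas R a)) (alt_k (bas R b)) (alt_k (bas R a + bas R b)).
rewrite !dual_brE !sum_basl !sum_basD; lra.
Qed.

Lemma dual_Lie_jacobi D : dual_is_Lie D -> forall a b c m,
  \sum_j D j b c * D m a j + \sum_j D j c a * D m b j + \sum_j D j a b * D m c j = 0.
Proof.
case=> _ jac a b c m.
move: (jac (bas R a) (bas R b) (bas R c)) => /(congr1 (fun f : h6 R => f 0 m)).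
rewrite [LHS]mxE [X in X + _]mxE !dual_brE !sum_basl [RHS]mxE => {}jac.
apply: etrans jac; congr (_ + _ + _).
all: by apply: eq_bigr => j _; rewrite dual_brE !sum_basl mulrC.
Qed.

Section CocycleVanishingOnN.
Variable D : 'I_6 -> h6t2 R.
Hypotheses (D_cocycle : cocycle D) (D_Lie : dual_is_Lie D) (DN0 : D iN = 0).

Lemma DN_entry a b : D iN a b = 0.
Proof. by rewrite DN0 mxE. Qed.

Lemma D_diag k a : D k a a = 0.
Proof. by move: (dual_Lie_skew D_Lie k a a); lra. Qed.

(* Rewrite every concrete entry D k a b to 0 when it vanishes by weight,
   skew-symmetry or D N = 0, and otherwise to +-D k a' b' with a' < b'. *)
Ltac normalize_entries :=
  repeat match goal with
  | |- context [fun_of_matrix (D iN) ?a ?b] => rewrite (DN_entry a b)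
  | |- context [fun_of_matrix (D ?k) ?a ?a] => rewrite (D_diag k a)
  | |- context [fun_of_matrix (D ?k) ?a ?b] =>
      rewrite (cocycle_weight D_cocycle DN0 (k:=k) (a:=a) (b:=b) isT)
  | |- context [fun_of_matrix (D ?k) ?a ?b] =>
      let _ := constr:(isT : (nat_of_ord b < nat_of_ord a)%N) in
      rewrite (dual_Lie_skew D_Lie k a b)
  end.

Tactic Notation "cocycle_at" constr(i) constr(j) constr(a) constr(b) :=
  move: (cocycle_bas D_cocycle i j a b);
  rewrite !ad2_basE !big_ord6; cst_compute; normalize_entries;
  rewrite ?(mul0r, mulr0, add0r, addr0, subr0, sub0r, mul1r, mulr1, mulN1r, mulrN1).

(* M is central, so the cocycle condition for (x, M) says that D M is ad-invariant. *)
Lemma DM_eq0 : D iM = 0.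
Proof.
cocycle_at iAp iM iAp iM => ?.
cocycle_at iAm iM iAm iM => ?.
cocycle_at iBp iM iN iBp => ?.
have [DMNM DMApAm DMBpBm] : [/\ D iM iN iM = 0, D iM iAp iAm = 0 & D iM iBp iBm = 0].
  by split; lra.
apply/matrixP => a b; rewrite mxE.
by elim/ord6P: a; elim/ord6P: b; normalize_entries; rewrite ?(DMNM, DMApAm, DMBpBm) ?oppr0.
Qed.

Lemma DM_entry a b : D iM a b = 0.
Proof. by rewrite DM_eq0 mxE. Qed.

Local Notation u := (D iAp iAm iBp).

Lemma D_entries_N :
  [/\ D iAp iN iAp = 0, D iAm iN iAm = 0, D iAm iAp iBm = u,
      D iBp iN iBp = 2 * u & D iBm iN iBm = 2 * u].
Proof.
cocycle_at iAp iAm iN iM; rewrite ?DM_entry => ?.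
cocycle_at iAp iBp iAp iBp; rewrite ?DM_entry => ?.
cocycle_at iAp iBm iAp iBm; rewrite ?DM_entry => ?.
cocycle_at iAp iAm iAp iAm; rewrite ?DM_entry => ?.
cocycle_at iAp iBm iN iAm; rewrite ?DM_entry => ?.
by split; lra.
Qed.

Lemma D_entries_M :
  D iAp iAp iM = D iAm iAm iM - D iBm iBm iM - u /\
  D iBp iBp iM = - 2 * u - D iBm iBm iM.
Proof.
have [? ? ? ? ?] := D_entries_N.
cocycle_at iAp iBm iAm iM; rewrite ?DM_entry => ?.
cocycle_at iBp iBm iN iM; rewrite ?DM_entry => ?.
by split; lra.
Qed.

(* The A+ component of the dual Jacobi identity at (N, A-, B+) reads -2 u^2 = 0. *)
Lemma D_ApAmBp_eq0 : u = 0.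
Proof.
have [DApN DAmN _ DBpN _] := D_entries_N.
move: (dual_Lie_jacobi D_Lie iN iAm iBp iAp); rewrite !big_ord6; normalize_entries.
rewrite DApN DAmN DBpN => jacobi.
have uu : u * u = 0 by nra.
by apply/eqP; rewrite -[u == 0]orbb -mulf_eq0 uu.
Qed.

Local Notation c1 := (D iBm iBm iM / 2).
Local Notation c2 := (c1 - D iAm iAm iM).

Lemma D_coboundary k : D k = ad2 (bas R k) (r_of c1 c2).
Proof.
have [[cN cM] cAp cAm cBp cBm] := coboundary_r_of c1 c2.
rewrite !basisE in cN cM cAp cAm cBp cBm.
have [DApN DAmN DAmApBm DBpN DBmN] := D_entries_N.
have [DApApM DBpBpM] := D_entries_M.
have u0 := D_ApAmBp_eq0.
elim/ord6P: k; rewrite ?(cN, cM, cAp, cAm, cBp, cBm) ?DN0 ?DM_eq0 //.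
all: apply/matrixP => a b; elim/ord6P: a; elim/ord6P: b.
all: rewrite scale_wedge_basE //=; normalize_entries.
all: rewrite ?(DApN, DAmN, DAmApBm, DBpN, DBmN, DApApM, DBpBpM, u0) ?oppr0 //; lra.
Qed.

End CocycleVanishingOnN.

Lemma r_ofE c1 c2 a b : r_of c1 c2 a b =
  c1 * (bas R iN 0 a * bas R iM 0 b - bas R iM 0 a * bas R iN 0 b) +
  c2 * (bas R iAp 0 a * bas R iAm 0 b - bas R iAm 0 a * bas R iAp 0 b).
Proof. by rewrite /r_of !basisE [LHS]mxE [X in X + _]mxE [X in _ + X]mxE !wedgeE. Qed.

Lemma sum_r_ofl c1 c2 b (G : 'I_6 -> R) : \sum_i r_of c1 c2 i b * G i =
  c1 * (bas R iM 0 b * G iN - bas R iN 0 b * G iM) +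
  c2 * (bas R iAm 0 b * G iAp - bas R iAp 0 b * G iAm).
Proof. by rewrite big_ord6 !r_ofE !basE /=; ring. Qed.

Lemma sum_r_ofr c1 c2 a (G : 'I_6 -> R) : \sum_j r_of c1 c2 a j * G j =
  c1 * (bas R iN 0 a * G iM - bas R iM 0 a * G iN) +
  c2 * (bas R iAp 0 a * G iAm - bas R iAm 0 a * G iAp).
Proof. by rewrite big_ord6 !r_ofE !basE /=; ring. Qed.

Lemma sum_mul_nested (F G : 'I_6 -> R) (H : 'I_6 -> 'I_6 -> R) :
  \sum_i \sum_k F i * G k * H i k = \sum_i F i * \sum_k G k * H i k.
Proof.
by apply: eq_bigr => i _; rewrite mulr_sumr; apply: eq_bigr => k _; rewrite mulrA.
Qed.

Lemma schouten_r_of c1 c2 :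
  schouten (r_of c1 c2) = [ffun t => - c2 ^+ 2 * wedge3 (eAp R) (eAm R) (eM R) t].
Proof.
apply/ffunP => [[[a b] c]]; rewrite !ffunE /= !sum_mul_nested.
rewrite !(sum_r_ofl, sum_r_ofr).
rewrite !(cst_bas _ _ a) !(cst_bas _ _ b) !(cst_bas _ _ c) !big_ord6 !basisE; cst_compute.
ring.
Qed.

Lemma wedge3E u v w a b c : wedge3 u v w (a, b, c) =
  u 0 a * v 0 b * w 0 c + v 0 a * w 0 b * u 0 c + w 0 a * u 0 b * v 0 c
  - v 0 a * u 0 b * w 0 c - u 0 a * w 0 b * v 0 c - w 0 a * v 0 b * u 0 c.
Proof. by rewrite !ffunE. Qed.

Lemma ad3E x (T : h6t3 R) a b c : ad3 x T (a, b, c) =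
  \sum_i adm x i a * T (i, b, c) + \sum_i adm x i b * T (a, i, c)
  + \sum_i adm x i c * T (a, b, i).
Proof. by rewrite ffunE. Qed.

Lemma ad3_scale x k (T : h6t3 R) :
  ad3 x [ffun t => k * T t] = [ffun t => k * ad3 x T t].
Proof.
by apply/ffunP => [[[a b] c]]; rewrite ad3E [RHS]ffunE ad3E !big_ord6 !ffunE; ring.
Qed.

Lemma ad3_wedge3 x u v w : ad3 x (wedge3 u v w) =
  [ffun t => wedge3 (br x u) v w t + wedge3 u (br x v) w t + wedge3 u v (br x w) t].
Proof.
apply/ffunP => [[[a b] c]]; rewrite ad3E ffunE !wedge3E !br_adm.
rewrite ![fun_of_matrix (_ *m _) _ _]mxE !big_ord6 !wedge3E.
ring.
Qed.

Lemma wedge3_invariant x : ad3 x (wedge3 (eAp R) (eAm R) (eM R)) = [ffun => 0].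
Proof.
rewrite ad3_wedge3 !basisE; apply/ffunP => [[[a b] c]].
rewrite ffunE !wedge3E ffunE !br_basE !big_ord6.
rewrite !(cst_bas _ _ a) !(cst_bas _ _ b) !(cst_bas _ _ c) !big_ord6; cst_compute.
ring.
Qed.

Lemma delta_of_coboundary D r : (forall k, D k = ad2 (bas R k) r) ->
  forall x, delta_of D x = ad2 x r.
Proof. by move=> Dr x; rewrite ad2_sum; apply: eq_bigr => k _; rewrite Dr. Qed.

Lemma lie_bialgebra_N0_coboundary D : lie_bialgebra D -> delta_of D (eN R) = 0 ->
  exists c1 c2 : R, forall x : h6 R, delta_of D x = ad2 x (r_of c1 c2).
Proof.
case=> D_cocycle D_Lie; rewrite eN_bas delta_of_bas => DN0.
by do 2!eexists; apply: delta_of_coboundary; exact: D_coboundary D_cocycle D_Lie DN0.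
Qed.

Lemma schouten_r_of_eq0 (c1 c2 : R) :
  schouten (r_of c1 c2) = [ffun => 0] <-> c2 = 0.
Proof.
rewrite schouten_r_of; split => [/ffunP/(_ (iAp, iAm, iM)) | ->].
  rewrite ffunE [RHS]ffunE !basisE wedge3E !basE /= => entry.
  by apply/eqP; rewrite -sqrf_eq0; apply/eqP; rewrite -[RHS]oppr0 -entry; ring.
by apply/ffunP => t; rewrite !ffunE expr0n /= oppr0 mul0r.
Qed.

Lemma schouten_r_of_invariant (c1 c2 : R) x : ad3 x (schouten (r_of c1 c2)) = [ffun => 0].
Proof.
rewrite schouten_r_of ad3_scale wedge3_invariant.
by apply/ffunP => t; rewrite !ffunE mulr0.
Qed.

End TwoPhoton.

Theorem mainTheorem1 (R : realFieldType) :
  (forall D : 'I_6 -> h6t2 R, lie_bialgebra D ->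
     (delta_of D (eN R) = 0 <->
      exists c1 c2 : R, forall x : h6 R, delta_of D x = ad2 x (r_of c1 c2)))
  /\
  (forall c1 c2 : R,
     [/\ ad2 (eN R) (r_of c1 c2) = 0 /\ ad2 (eM R) (r_of c1 c2) = 0,
         ad2 (eAp R) (r_of c1 c2) = - (c1 + c2) *: wedge (eAp R) (eM R),
         ad2 (eAm R) (r_of c1 c2) = (c1 - c2) *: wedge (eAm R) (eM R),
         ad2 (eBp R) (r_of c1 c2) = - (2 * c1) *: wedge (eBp R) (eM R) &
         ad2 (eBm R) (r_of c1 c2) = (2 * c1) *: wedge (eBm R) (eM R)])
  /\
  (forall c1 c2 : R,
     [/\ schouten (r_of c1 c2) = [ffun t => - c2 ^+ 2 * wedge3 (eAp R) (eAm R) (eM R) t],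
         (schouten (r_of c1 c2) = [ffun => 0] <-> c2 = 0) &
         ((schouten (r_of c1 c2) <> [ffun => 0] /\
           forall x : h6 R, ad3 x (schouten (r_of c1 c2)) = [ffun => 0])
          <-> c2 <> 0)]).
Proof.
split.
  move=> D HD; split; first exact: lie_bialgebra_N0_coboundary HD.
  by case=> c1 [c2 ->]; case: (coboundary_r_of c1 c2) => [[]].
split; first exact: coboundary_r_of.
move=> c1 c2; split; [exact: schouten_r_of | exact: schouten_r_of_eq0 |].
split=> [[neq0 _] c2_0 | c2_neq0]; first by apply/neq0/schouten_r_of_eq0.
split=> [/schouten_r_of_eq0 // | x]; exact: schouten_r_of_invariant.
Qed.
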